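(* Let $X$ be a $T_1$ space and $\mathcal{P}$ an ideal of closed subsets of $X$. If $X$ is $\tau\mathcal{P}$-compact, then $X$ is $\tau\mathcal{P}$-pseudocompact.
   Context: An ideal of closed subsets of $X$ is a family $\mathcal{P}$ of closed subsets closed under finite unions and under passing to closed subsets. For $f\in\mathbb{R}^X$, $D_f$ is the set of discontinuity points of $f$; $C(X)_\mathcal{P}=\{f\in\mathbb{R}^X\colon\overline{D_f}\in\mathcal{P}\}$ and $C^*(X)_\mathcal{P}$ is the set of bounded members of $C(X)_\mathcal{P}$. For $f\in C(X)_\mathcal{P}$, $Z_\mathcal{P}(f)=\{x\colon f(x)=0\}$, and $Z_\mathcal{P}[X]$ is the set of all such zero sets. $X$ is $\tau\mathcal{P}$-compact if every family $\mathcal{F}\subseteq Z_\mathcal{P}[X]$ with the finite intersection property has nonempty intersection. $X$ is $\tau\mathcal{P}$-pseudocompact if $C(X)_\mathcal{P}=C^*(X)_\mathcal{P}$. *)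

From HB Require Import structures.
From mathcomp Require Import all_boot all_order all_algebra.
From mathcomp Require Import all_classical all_reals all_analysis.
Set Implicit Arguments. Unset Strict Implicit. Unset Printing Implicit Defensive.
Import Order.TTheory GRing.Theory Num.Theory numFieldNormedType.Exports.
Local Open Scope classical_set_scope.
Local Open Scope ring_scope.

Section Defs.
Context {X : topologicalType} {R : realType}.

Definition closed_ideal (P : set (set X)) : Prop :=
  [/\ (forall A, P A -> closed A),
      (forall A B, P A -> P B -> P (A `|` B)) &
      (forall A B, P A -> closed B -> B `<=` A -> P B)].

Definition discont (f : X -> R) : set X := [set x : X | ~ {for x, continuous f}].

Definition CP (P : set (set X)) (f : X -> R) : Prop := P (closure (discont f)).

Definition bounded_fun (f : X -> R) : Prop := exists M : R, forall x, `|f x| <= M.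

Definition ZP (P : set (set X)) : set (set X) :=
  [set Z | exists f, CP P f /\ Z = f @^-1` [set 0]].

Definition tauP_compact (P : set (set X)) : Prop :=
  forall F : set (set X), F `<=` ZP P -> finI F id ->
    (\bigcap_(A in F) A) !=set0.

(* tau P-pseudocompact: C(X)_P = C^*(X)_P *)
Definition tauP_pseudocompact (P : set (set X)) : Prop :=
  forall f : X -> R, CP P f -> bounded_fun f.
End Defs.

From Pilot Require Import Defs.
From mathcomp Require Import all_boot all_order all_algebra.
From mathcomp Require Import all_classical all_reals all_analysis.
Set Implicit Arguments. Unset Strict Implicit. Unset Printing Implicit Defensive.
Import Order.TTheory GRing.Theory Num.Theory numFieldNormedType.Exports.
Local Open Scope classical_set_scope.
Local Open Scope ring_scope.

(* If f is unbounded, the superlevel sets [n <= |f|] form a decreasing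
   sequence of nonempty P-zero-sets, so tau P-compactness yields a point of
   their intersection, where |f| would exceed every natural number. *)

Lemma finI_range_nonincreasing (T : choiceType) (Z : nat -> set T) :
  {homo Z : m n / (m <= n)%N >-> n `<=` m} -> (forall n, Z n !=set0) ->
  finI (range Z) id.
Proof.
move=> Zdec Zne; have /choice[u Zu] := Zne.
apply: (@filter_finI _ (u @ \oo)) => _ [n _ <-] /=.
by near=> k; apply: (Zdec n k) (Zu k); near: k; exact: nbhs_infty_ge.
Unshelve. all: end_near.
Qed.

Section superlevel_sets.
Context {X : topologicalType} {R : realType} (P : set (set X)).
Hypothesis Pideal : closed_ideal P.

Lemma CP_discontS (f g : X -> R) :
  discont g `<=` discont f -> CP P f -> CP P g.
Proof.
case: Pideal => _ _ Psub gf Pf.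
exact: (Psub _ _ Pf (@closed_closure _ _) (closureS gf)).
Qed.

Lemma ZP_superlevel (f : X -> R) (r : R) :
  CP P f -> @ZP X R P [set x | r <= `|f x|].
Proof.
move=> Pf; exists (fun x => Num.min `|f x| r - r); split.
- apply: CP_discontS Pf => x /= + fx; apply.
  apply: cvgB; last exact: cvg_cst.
  exact: (@continuous_min _ _ (fun x => `|f x|) (fun=> r) x
    (cvg_norm fx) (cvg_cst _)).
- apply/seteqP; split => x /= => [rf|/eqP]; [apply/eqP|];
    by rewrite subr_eq0 eq_minr.
Qed.

End superlevel_sets.

Lemma unbounded_superlevel_nonempty (X : topologicalType) (R : realType)
    (f : X -> R) (r : R) :
  (* qualified: MathComp-Analysis has its own [bounded_fun] *)
  ~ Defs.bounded_fun f -> [set x | r <= `|f x|] !=set0.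
Proof.
move=> unb; apply: contrapT => /forallNP small; apply: unb; exists r => x.
by rewrite leNgt; apply/negP => /ltW; exact: small.
Qed.

Theorem theorem4p2 (R : realType) (X : topologicalType) (P : set (set X)) :
  @accessible_space X -> closed_ideal P ->
  @tauP_compact X R P -> @tauP_pseudocompact X R P.
Proof.
move=> _ Pideal comp f Pf; apply: contrapT => unb.
pose Z n := [set x | n%:R <= `|f x|].
have ZZP : range Z `<=` @ZP X R P by move=> _ [n _ <-]; exact: ZP_superlevel.
have Zdec : {homo Z : m n / (m <= n)%N >-> n `<=` m}.
  by move=> m n mn x /=; apply: le_trans; rewrite ler_nat.
have Zne n : Z n !=set0 by exact: unbounded_superlevel_nonempty.
have [x Zx] := comp _ ZZP (finI_range_nonincreasing Zdec Zne).
pose k := Num.Def.archi_bound `|f x|.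
have : Z k x by apply: Zx; exists k.
by rewrite /Z /= leNgt archi_boundP.
Qed.
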